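(* Let $B_n$ ($n\ge 2$) be endowed with the dual Garside structure and let $\varepsilon=\delta a_{21}$. For an integer $k$, let $d=\gcd(k,n-1)$ and let $p,q$ be integers with $(n-1)p+kq=d$. Let $[\varepsilon^d]$ and $[\varepsilon^k]$ denote the conjugacy classes of $\varepsilon^d$ and $\varepsilon^k$, and define $f:[\varepsilon^d]\to[\varepsilon^k]$ and $g:[\varepsilon^k]\to[\varepsilon^d]$ by $f(\alpha)=\alpha^{k/d}$ and $g(\beta)=\delta^{np}\beta^q$. Then $f$ and $g$ are inverse to each other, $f([\varepsilon^d]^{St})=[\varepsilon^k]^{St}$ and $g([\varepsilon^k]^{St})=[\varepsilon^d]^{St}$. In particular, $$\#[\varepsilon^d]^S=\#[\varepsilon^d]^{St}=\#[\varepsilon^k]^{St}\leqslant\#[\varepsilon^k]^S.$$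
   Context: $B_n$ has band generators $a_{ij}$ ($1\le j<i\le n$), $a_{ij}=\sigma_{i-1}\cdots\sigma_{j+1}\sigma_j\sigma_{j+1}^{-1}\cdots\sigma_{i-1}^{-1}$. The dual Garside structure is $(B_n,B_n^+,\delta)$ with $B_n^+$ the monoid of positive words in band generators and $\delta=a_{n,n-1}\cdots a_{21}=\sigma_{n-1}\cdots\sigma_1$. $\alpha\preccurlyeq\beta$ iff $\alpha^{-1}\beta\in B_n^+$. $\inf(\alpha)=\max\{r:\delta^r\preccurlyeq\alpha\}$, $\sup(\alpha)=\min\{s:\alpha\preccurlyeq\delta^s\}$, $\operatorname{len}=\sup-\inf$. The super summit set $[\alpha]^S$ is the set of conjugates of $\alpha$ of minimal $\operatorname{len}$; the stable super summit set is $[\alpha]^{St}=\{\beta\in[\alpha]^S:\beta^m\in[\alpha^m]^S\text{ for all }m\in\mathbb Z\}$. *)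

(* The braid group B_n is given by its Artin presentation:
   elements are words in the letters sigma_i^{+-1} (1 <= i <= n-1), modulo the
   congruence [beq n] generated by free cancellation and the Artin relations. *)
From Stdlib Require Import List ZArith Arith Lia.
Import ListNotations.

(* (i, true) = sigma_i, (i, false) = sigma_i^{-1} *)
Definition letter := (nat * bool)%type.
Definition word := list letter.

Definition winv (w : word) : word := rev (map (fun '(i, b) => (i, negb b)) w).

Definition valid (n : nat) (w : word) : Prop :=
  Forall (fun '(i, _) => 1 <= i <= n - 1) w.

Inductive brel (n : nat) : word -> word -> Prop :=
| brel_free i b : 1 <= i <= n - 1 -> brel n [(i, b); (i, negb b)] []
| brel_comm i j : 1 <= i <= n - 1 -> 1 <= j <= n - 1 -> i + 2 <= j ->
    brel n [(i, true); (j, true)] [(j, true); (i, true)]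
| brel_braid i : 1 <= i -> i + 1 <= n - 1 ->
    brel n [(i, true); (i + 1, true); (i, true)]
           [(i + 1, true); (i, true); (i + 1, true)].

Inductive beq (n : nat) : word -> word -> Prop :=
| beq_rel u v a c : brel n u v -> beq n (a ++ u ++ c) (a ++ v ++ c)
| beq_refl u : beq n u u
| beq_sym u v : beq n u v -> beq n v u
| beq_trans u v w : beq n u v -> beq n v w -> beq n u w.

Definition wpow (w : word) (m : Z) : word :=
  match m with
  | Z0 => []
  | Zpos p => concat (repeat w (Pos.to_nat p))
  | Zneg p => concat (repeat (winv w) (Pos.to_nat p))
  end.

(* band generator a_{ij} = s_{i-1}..s_{j+1} s_j s_{j+1}^{-1}..s_{i-1}^{-1} *)
Definition band (i j : nat) : word :=
  map (fun m => (m, true)) (rev (seq (j + 1) (i - j - 1)))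
  ++ [(j, true)]
  ++ map (fun m => (m, false)) (seq (j + 1) (i - j - 1)).

(* delta = a_{n,n-1} ... a_{21} *)
Definition delta (n : nat) : word :=
  concat (map (fun i => band (i + 1) i) (rev (seq 1 (n - 1)))).

Definition positive (n : nat) (w : word) : Prop :=
  exists l : list (nat * nat),
    Forall (fun '(i, j) => 1 <= j /\ j < i /\ i <= n) l /\
    beq n w (concat (map (fun '(i, j) => band i j) l)).

Definition preceq (n : nat) (a b : word) : Prop := positive n (winv a ++ b).

Definition is_inf (n : nat) (a : word) (r : Z) : Prop :=
  preceq n (wpow (delta n) r) a /\
  forall r', preceq n (wpow (delta n) r') a -> (r' <= r)%Z.

Definition is_sup (n : nat) (a : word) (s : Z) : Prop :=
  preceq n a (wpow (delta n) s) /\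
  forall s', preceq n a (wpow (delta n) s') -> (s <= s')%Z.

Definition is_len (n : nat) (a : word) (l : Z) : Prop :=
  exists r s, is_inf n a r /\ is_sup n a s /\ l = (s - r)%Z.

Definition conj_class (n : nat) (a b : word) : Prop :=
  valid n b /\ exists c, valid n c /\ beq n b (winv c ++ a ++ c).

Definition sss (n : nat) (a b : word) : Prop :=
  conj_class n a b /\
  exists l, is_len n b l /\
    forall c l', conj_class n a c -> is_len n c l' -> (l <= l')%Z.

Definition stable_sss (n : nat) (a b : word) : Prop :=
  sss n a b /\ forall m : Z, sss n (wpow a m) (wpow b m).

(* the set of braids satisfying P (a beq-invariant predicate) is finite with
   exactly N elements of B_n *)
Definition has_card (n : nat) (P : word -> Prop) (N : nat) : Prop :=
  exists l : list word,
    length l = N /\ Forall P l /\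
    ForallOrdPairs (fun u v => ~ beq n u v) l /\
    (forall w, P w -> Exists (beq n w) l).

Definition eps (n : nat) : word := delta n ++ band 2 1.

(* Write u = (n-1)/d.  The braid eps = delta a_21 satisfies eps^(n-1) = delta^n, and delta^n is
   central.  On a conjugate c^-1 eps^d c the map f only multiplies the exponent by k/d, and on
   c^-1 eps^k c the map g turns it into (n-1)p + kq = d; so f and g are mutually inverse
   bijections between the two conjugacy classes.

   The exponent sum is a conjugacy invariant and inf (n-1) <= expsum <= sup (n-1), so every
   conjugate of eps^(dm) has length >= 0, and >= 1 unless u divides m.  An element a of
   [eps^d]^S has length <= len eps^d <= 1, hence delta^d <= a, and a^u = delta^n.  Writing
   m = uj + t with 0 <= t < u, a^m = delta^(nj) a^t with delta^(dt) <= a^t <= delta^(dt+1),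
   and a^m = delta^(nj) if t = 0; so a^m attains the lower bounds, i.e. [eps^d]^S = [eps^d]^St.
   Since multiplication by the central delta^(np) preserves super summit sets, f and g restrict
   to inverse bijections of the stable super summit sets, and the counting statement follows. *)

From Stdlib Require Import List ZArith Lia Setoid Morphisms Classical.
Import ListNotations.

(** * Braid words as a group *)

Lemma winv_app (a b : word) : winv (a ++ b) = winv b ++ winv a.
Proof. unfold winv. now rewrite map_app, rev_app_distr. Qed.

Lemma winv_involutive (a : word) : winv (winv a) = a.
Proof.
  unfold winv. rewrite map_rev, rev_involutive, map_map.
  induction a as [|[i b] a IH]; simpl; [reflexivity|].
  now rewrite Bool.negb_involutive, IH.
Qed.

Lemma wpow_1 (w : word) : wpow w 1 = w.
Proof. simpl. apply app_nil_r. Qed.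

Lemma concat_repeat_S (w : word) (k : nat) :
  concat (repeat w (S k)) = concat (repeat w k) ++ w.
Proof.
  induction k as [|k IH]; simpl; [now rewrite app_nil_r|].
  now rewrite <- app_assoc, <- IH.
Qed.

Lemma wpow_of_nat (w : word) (k : nat) : wpow w (Z.of_nat k) = concat (repeat w k).
Proof. destruct k; simpl; [reflexivity|now rewrite SuccNat2Pos.id_succ]. Qed.

Lemma wpow_opp_of_nat (w : word) (k : nat) :
  wpow w (- Z.of_nat k) = concat (repeat (winv w) k).
Proof. destruct k; simpl; [reflexivity|now rewrite SuccNat2Pos.id_succ]. Qed.

Notation commutes n u v := (beq n (u ++ v) (v ++ u)).

Section Group.
Variable n : nat.

Lemma beq_app_r (a b c : word) : beq n a b -> beq n (a ++ c) (b ++ c).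
Proof.
  induction 1 as [u v a' c' H| | |]; [|apply beq_refl|now apply beq_sym|eapply beq_trans; eauto].
  rewrite <- !app_assoc. now apply beq_rel.
Qed.

Lemma beq_app_l (a b c : word) : beq n a b -> beq n (c ++ a) (c ++ b).
Proof.
  induction 1 as [u v a' c' H| | |]; [|apply beq_refl|now apply beq_sym|eapply beq_trans; eauto].
  rewrite !(app_assoc c a'). now apply beq_rel.
Qed.

Global Instance beq_equivalence : Equivalence (beq n).
Proof. split; red; [apply beq_refl|apply beq_sym|apply beq_trans]. Qed.

Global Instance app_beq_proper : Proper (beq n ==> beq n ==> beq n) (@app letter).
Proof. intros a b Hab c d Hcd. transitivity (b ++ c); [apply beq_app_r|apply beq_app_l]; easy. Qed.

Lemma brel_beq (u v : word) : brel n u v -> beq n u v.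
Proof. intro H. generalize (beq_rel n u v [] [] H). simpl. now rewrite !app_nil_r. Qed.

Lemma valid_app (a b : word) : valid n (a ++ b) <-> valid n a /\ valid n b.
Proof. apply Forall_app. Qed.

Lemma valid_winv (a : word) : valid n a -> valid n (winv a).
Proof.
  intro H. apply Forall_rev, Forall_map. eapply Forall_impl; [|exact H]. now intros [i b].
Qed.

Lemma valid_letter (i : nat) (b : bool) : 1 <= i <= n - 1 -> valid n [(i, b)].
Proof. repeat constructor; easy. Qed.

Lemma beq_valid (a b : word) : beq n a b -> valid n a <-> valid n b.
Proof.
  induction 1 as [u v a c H| | |]; try tauto.
  assert (valid n u /\ valid n v) by (destruct H; split; repeat constructor; lia).
  rewrite !valid_app. tauto.
Qed.

Lemma cancel_winv_r (a : word) : valid n a -> beq n (a ++ winv a) [].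
Proof.
  induction a as [|[i b] a IH]; intro Va; [reflexivity|].
  inversion Va as [|? ? Hi Va']; subst.
  change ((i, b) :: a) with ([(i, b)] ++ a).
  rewrite winv_app, <- app_assoc, (app_assoc a), IH by easy. simpl.
  apply brel_beq. now constructor.
Qed.

Lemma cancel_winv_l (a : word) : valid n a -> beq n (winv a ++ a) [].
Proof.
  intro Va. rewrite <- (winv_involutive a) at 2. now apply cancel_winv_r, valid_winv.
Qed.

Lemma winv_beq (a b : word) : valid n a -> beq n a b -> beq n (winv a) (winv b).
Proof.
  intros Va Hab. assert (Vb : valid n b) by now apply (beq_valid a b).
  transitivity (winv a ++ b ++ winv b); [now rewrite cancel_winv_r, app_nil_r|].
  transitivity (winv a ++ a ++ winv b); [now apply beq_app_l, beq_app_r|].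
  now rewrite app_assoc, cancel_winv_l.
Qed.

Lemma valid_wpow (w : word) (m : Z) : valid n w -> valid n (wpow w m).
Proof.
  intro Vw. assert (forall u k, valid n u -> valid n (concat (repeat u k))).
  { intros u k Vu. induction k; [constructor|]. now apply valid_app. }
  destruct m; simpl; auto using valid_winv; constructor.
Qed.

Lemma wpow_succ (w : word) (m : Z) : valid n w -> beq n (wpow w (m + 1)) (wpow w m ++ w).
Proof.
  intro Vw. destruct (Z_le_gt_dec 0 m) as [Hm|Hm].
  - replace (m + 1)%Z with (Z.of_nat (S (Z.to_nat m))) by lia.
    replace m with (Z.of_nat (Z.to_nat m)) at 2 by lia.
    now rewrite !wpow_of_nat, concat_repeat_S.
  - replace m with (- Z.of_nat (S (Z.to_nat (- m - 1))))%Z at 2 by lia.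
    replace (m + 1)%Z with (- Z.of_nat (Z.to_nat (- m - 1)))%Z by lia.
    now rewrite !wpow_opp_of_nat, concat_repeat_S, <- app_assoc, cancel_winv_l, app_nil_r.
Qed.

Lemma wpow_pred (w : word) (m : Z) : valid n w -> beq n (wpow w (m - 1)) (wpow w m ++ winv w).
Proof.
  intro Vw. rewrite <- (Z.sub_add 1 m) at 2.
  now rewrite wpow_succ, <- app_assoc, cancel_winv_r, app_nil_r.
Qed.

Lemma wpow_add (w : word) (a b : Z) :
  valid n w -> beq n (wpow w (a + b)) (wpow w a ++ wpow w b).
Proof.
  intro Vw. induction b as [|b IH|b IH] using Z.peano_ind.
  - now rewrite Z.add_0_r, app_nil_r.
  - rewrite <- !Z.add_1_r, Z.add_assoc, !wpow_succ, IH by easy. now rewrite app_assoc.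
  - rewrite <- !Z.sub_1_r, Z.add_sub_assoc, !wpow_pred, IH by easy. now rewrite app_assoc.
Qed.

Lemma wpow_opp (w : word) (a : Z) : valid n w -> beq n (wpow w (- a)) (winv (wpow w a)).
Proof.
  intro Vw. assert (Va : valid n (wpow w a)) by now apply valid_wpow.
  transitivity (winv (wpow w a) ++ wpow w a ++ wpow w (- a)).
  - now rewrite app_assoc, cancel_winv_l.
  - now rewrite <- wpow_add, Z.add_opp_diag_r, app_nil_r.
Qed.

Lemma wpow_mul (w : word) (a b : Z) :
  valid n w -> beq n (wpow (wpow w a) b) (wpow w (a * b)).
Proof.
  intro Vw. assert (Va : valid n (wpow w a)) by now apply valid_wpow.
  induction b as [|b IH|b IH] using Z.peano_ind.
  - now rewrite Z.mul_0_r.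
  - now rewrite <- Z.add_1_r, wpow_succ, IH, Z.mul_add_distr_l, Z.mul_1_r, wpow_add.
  - rewrite <- Z.sub_1_r, wpow_pred, IH, Z.mul_sub_distr_l, Z.mul_1_r by easy.
    now rewrite <- Z.add_opp_r, wpow_add, wpow_opp.
Qed.

Lemma wpow_beq (u v : word) (m : Z) : valid n u -> beq n u v -> beq n (wpow u m) (wpow v m).
Proof.
  intros Vu Huv. assert (Vv : valid n v) by now apply (beq_valid u v).
  induction m as [|m IH|m IH] using Z.peano_ind; [reflexivity| |].
  - now rewrite <- Z.add_1_r, !wpow_succ, IH, Huv.
  - now rewrite <- Z.sub_1_r, !wpow_pred, IH, (winv_beq u v).
Qed.

Lemma wpow_conj (c x : word) (m : Z) : valid n c -> valid n x ->
  beq n (wpow (winv c ++ x ++ c) m) (winv c ++ wpow x m ++ c).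
Proof.
  intros Vc Vx.
  assert (Vcxc : valid n (winv c ++ x ++ c)) by (rewrite !valid_app; auto using valid_winv).
  induction m as [|m IH|m IH] using Z.peano_ind.
  - now rewrite cancel_winv_l.
  - rewrite <- Z.add_1_r, !wpow_succ, IH by easy.
    now rewrite <- !app_assoc, (app_assoc c (winv c)), cancel_winv_r.
  - rewrite <- Z.sub_1_r, !wpow_pred, IH, !winv_app, winv_involutive by easy.
    now rewrite <- !app_assoc, (app_assoc c (winv c)), cancel_winv_r.
Qed.

Definition central (u : word) : Prop := forall v, valid n v -> commutes n u v.

Lemma commutes_sym (u v : word) : commutes n u v -> commutes n v u.
Proof. now symmetry. Qed.

Lemma commutes_beq (u v v' : word) : beq n v v' -> commutes n u v -> commutes n u v'.
Proof. intros Hv H. now rewrite <- Hv. Qed.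

Lemma commutes_beq_l (u u' v : word) : beq n u u' -> commutes n u v -> commutes n u' v.
Proof. intros Hu H. now rewrite <- Hu. Qed.

Lemma commutes_app (u a b : word) : commutes n u a -> commutes n u b -> commutes n u (a ++ b).
Proof. intros Ha Hb. now rewrite app_assoc, Ha, <- app_assoc, Hb, app_assoc. Qed.

Lemma commutes_winv (u a : word) : valid n a -> commutes n u a -> commutes n u (winv a).
Proof.
  intros Va H. transitivity (winv a ++ a ++ u ++ winv a).
  - now rewrite app_assoc, cancel_winv_l.
  - now rewrite (app_assoc a u), <- H, <- app_assoc, cancel_winv_r, app_nil_r.
Qed.

Lemma commutes_wpow (u w : word) (m : Z) :
  valid n w -> commutes n u w -> commutes n u (wpow w m).
Proof.
  intros Vw H. induction m as [|m IH|m IH] using Z.peano_ind.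
  - simpl. now rewrite app_nil_r.
  - apply (commutes_beq u (wpow w m ++ w)); [symmetry; now apply wpow_succ|].
    now apply commutes_app.
  - apply (commutes_beq u (wpow w m ++ winv w)); [symmetry; now apply wpow_pred|].
    now apply commutes_app, commutes_winv.
Qed.

Lemma commutes_wpow_self (w : word) (a : Z) : valid n w -> commutes n (wpow w a) w.
Proof.
  intro Vw. apply commutes_sym, commutes_wpow; [exact Vw..|apply beq_refl].
Qed.

Lemma central_wpow (u : word) (m : Z) : valid n u -> central u -> central (wpow u m).
Proof. intros Vu Hu v Vv. now apply commutes_sym, commutes_wpow, commutes_sym, Hu. Qed.

Lemma conj_central (z w : word) : valid n z -> valid n w -> central z ->
  beq n (winv z ++ w ++ z) w.
Proof. intros Vz Vw Hz. now rewrite <- (Hz w Vw), app_assoc, cancel_winv_l. Qed.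

Lemma wpow_conj_central (x c z : word) (u : Z) : valid n x -> valid n c ->
  central z -> beq n (wpow x u) z -> beq n (wpow (winv c ++ x ++ c) u) z.
Proof.
  intros Vx Vc Hz Hxu.
  now rewrite wpow_conj, Hxu, (Hz c Vc), app_assoc, cancel_winv_l by easy.
Qed.

End Group.

(** * Exponent sum and the dual positive monoid *)

Definition sigma (i : nat) : letter := (i, true).

Definition letter_exp (b : bool) : Z := if b then 1%Z else (-1)%Z.

Fixpoint expsum (w : word) : Z :=
  match w with
  | [] => 0
  | (_, b) :: w' => letter_exp b + expsum w'
  end.

Lemma expsum_app (a b : word) : expsum (a ++ b) = (expsum a + expsum b)%Z.
Proof. induction a as [|[i c] a IH]; simpl; lia. Qed.

Lemma expsum_winv (a : word) : expsum (winv a) = (- expsum a)%Z.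
Proof.
  induction a as [|[i b] a IH]; [reflexivity|].
  change ((i, b) :: a) with ([(i, b)] ++ a).
  rewrite winv_app, !expsum_app, IH. change (winv [(i, b)]) with [(i, negb b)].
  destruct b; cbn [expsum letter_exp negb]; lia.
Qed.

Lemma expsum_wpow (w : word) (m : Z) : expsum (wpow w m) = (m * expsum w)%Z.
Proof.
  assert (Hrep : forall (u : word) k, expsum (concat (repeat u k)) = (Z.of_nat k * expsum u)%Z).
  { intros u k. induction k; [reflexivity|]. cbn [repeat concat]. rewrite expsum_app, IHk. lia. }
  destruct m as [|p|p]; [reflexivity| |]; unfold wpow;
    rewrite Hrep, ?expsum_winv, positive_nat_Z; lia.
Qed.

Lemma expsum_beq (n : nat) (a b : word) : beq n a b -> expsum a = expsum b.
Proof.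
  induction 1 as [u v a c H| | |]; try congruence.
  rewrite !expsum_app. destruct H as [i []| |]; cbn [expsum letter_exp negb]; lia.
Qed.

Lemma expsum_sigmas (L : list nat) : expsum (map sigma L) = Z.of_nat (length L).
Proof. induction L; cbn [map expsum length sigma letter_exp]; [reflexivity|]. rewrite IHL. lia. Qed.

Definition bands (l : list (nat * nat)) : word := concat (map (fun '(i, j) => band i j) l).

Definition band_index (n : nat) : nat * nat -> Prop := fun '(i, j) => 1 <= j /\ j < i /\ i <= n.

Lemma bands_app (l l' : list (nat * nat)) : bands (l ++ l') = bands l ++ bands l'.
Proof. unfold bands. now rewrite map_app, concat_app. Qed.

Lemma expsum_band (i j : nat) : expsum (band i j) = 1%Z.
Proof.
  unfold band. rewrite !expsum_app, expsum_sigmas.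
  assert (Hinv : forall L, expsum (map (fun m => (m, false)) L) = (- Z.of_nat (length L))%Z).
  { induction L; cbn [map expsum length letter_exp]; [reflexivity|]. rewrite IHL. lia. }
  rewrite Hinv, length_rev. cbn [expsum letter_exp]. lia.
Qed.

Lemma expsum_bands (l : list (nat * nat)) : expsum (bands l) = Z.of_nat (length l).
Proof.
  induction l as [|[i j] l IH]; [reflexivity|].
  change (bands ((i, j) :: l)) with (band i j ++ bands l).
  rewrite expsum_app, IH, expsum_band. cbn [length]. lia.
Qed.

Lemma Forall_seq (P : nat -> Prop) (a l : nat) :
  (forall x, a <= x < a + l -> P x) -> Forall P (seq a l).
Proof. intro H. apply Forall_forall. intros x Hx%in_seq. apply H. lia. Qed.

Section PositiveMonoid.
Variable n : nat.

Lemma valid_sigmas (L : list nat) : Forall (fun i => 1 <= i <= n - 1) L -> valid n (map sigma L).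
Proof. intro H. apply Forall_map. exact H. Qed.

Lemma valid_band (i j : nat) : band_index n (i, j) -> valid n (band i j).
Proof.
  intros (Hj & Hji & Hi). unfold band. rewrite !valid_app. repeat split.
  - apply valid_sigmas, Forall_rev, Forall_seq. lia.
  - apply valid_letter. lia.
  - apply Forall_map, Forall_seq. lia.
Qed.

Lemma valid_bands (l : list (nat * nat)) : Forall (band_index n) l -> valid n (bands l).
Proof.
  induction 1 as [|[i j] l H Hl IH]; [constructor|].
  change (bands ((i, j) :: l)) with (band i j ++ bands l).
  rewrite valid_app. auto using valid_band.
Qed.

Global Instance positive_proper : Proper (beq n ==> iff) (positive n).
Proof.
  intros a b Hab. split; intros (l & Hl & Hw); exists l; split; try exact Hl.
  - now rewrite <- Hab.
  - now rewrite Hab.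
Qed.

Lemma positive_nil : positive n [].
Proof. exists []. split; [constructor|reflexivity]. Qed.

Lemma positive_app (a b : word) : positive n a -> positive n b -> positive n (a ++ b).
Proof.
  intros (l & Hl & Ha) (l' & Hl' & Hb). exists (l ++ l'). split.
  - now apply Forall_app.
  - fold (bands (l ++ l')). now rewrite bands_app, Ha, Hb.
Qed.

Lemma positive_band (i j : nat) : band_index n (i, j) -> positive n (band i j).
Proof. intro H. exists [(i, j)]. split; [now constructor|]. simpl. now rewrite app_nil_r. Qed.

Lemma positive_bands (w : word) :
  positive n w -> exists l, Forall (band_index n) l /\ beq n w (bands l).
Proof.
  intros (l & Hl & Hw). exists l. split; [|exact Hw].
  eapply Forall_impl; [|exact Hl]. now intros [].
Qed.

Lemma positive_valid (w : word) : positive n w -> valid n w.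
Proof. intros (l & Hl & Hw)%positive_bands. apply (beq_valid n _ _ Hw). now apply valid_bands. Qed.

Lemma positive_expsum (w : word) : positive n w -> (0 <= expsum w)%Z.
Proof. intros (l & _ & Hw)%positive_bands. rewrite (expsum_beq n _ _ Hw), expsum_bands. lia. Qed.

End PositiveMonoid.

(** * The Garside element *)

Definition desc (k : nat) : word := map sigma (rev (seq 1 k)).

Definition shift (w : word) : word := map (fun x => (S (fst x), snd x)) w.

Definition in_range (lo hi : nat) (w : word) : Prop := Forall (fun x => lo <= fst x <= hi) w.

Lemma desc_S (k : nat) : desc (S k) = [sigma (S k)] ++ desc k.
Proof. unfold desc. rewrite seq_S, rev_app_distr. reflexivity. Qed.

Lemma desc_S_shift (k : nat) : desc (S k) = shift (desc k) ++ [sigma 1].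
Proof.
  unfold desc, shift. cbn [seq rev]. rewrite map_app. f_equal.
  rewrite <- (seq_shift k 1), !map_rev, !map_map. reflexivity.
Qed.

Lemma band_succ (j : nat) : band (S j) j = [sigma j].
Proof. unfold band. now replace (S j - j - 1) with 0 by lia. Qed.

Lemma delta_desc (n : nat) : delta n = desc (n - 1).
Proof.
  unfold delta, desc. induction (rev (seq 1 (n - 1))) as [|i l IH]; [reflexivity|].
  simpl. now rewrite Nat.add_1_r, band_succ, IH.
Qed.

Lemma eps_delta_sigma1 (n : nat) : eps n = delta n ++ [sigma 1].
Proof. unfold eps. now rewrite (band_succ 1). Qed.

Lemma shift_band (i j : nat) : shift (band i j) = band (S i) (S j).
Proof.
  unfold band, shift. rewrite !map_app.
  replace (S i - S j - 1) with (i - j - 1) by lia. replace (S j + 1) with (S (j + 1)) by lia.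
  rewrite <- (seq_shift _ (j + 1)), !map_rev, !map_map. reflexivity.
Qed.

Lemma band_SS (m j : nat) : j <= m ->
  band (S (S m)) j = [sigma (S m)] ++ band (S m) j ++ winv [sigma (S m)].
Proof.
  intro H. unfold band. replace (S (S m) - j - 1) with (S (S m - j - 1)) by lia.
  rewrite seq_S. replace (j + 1 + (S m - j - 1)) with (S m) by lia.
  rewrite rev_app_distr, !map_app. simpl. now rewrite <- !app_assoc.
Qed.

Lemma band_1 (j : nat) : 1 <= j ->
  band (S j) 1 = shift (desc (j - 1)) ++ [sigma 1] ++ winv (shift (desc (j - 1))).
Proof.
  intro H. unfold band, desc, shift, winv.
  rewrite !map_map, !map_rev, rev_involutive, <- (seq_shift _ 1), !map_map.
  now replace (S j - 1 - 1) with (j - 1) by lia.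
Qed.

Lemma in_range_mono (lo hi lo' hi' : nat) (w : word) :
  lo' <= lo -> hi <= hi' -> in_range lo hi w -> in_range lo' hi' w.
Proof. intros Hlo Hhi. apply Forall_impl. lia. Qed.

Lemma in_range_desc (k : nat) : in_range 1 k (desc k).
Proof. apply Forall_map, Forall_rev, Forall_seq. simpl. lia. Qed.

Lemma in_range_band (i j : nat) : j < i -> in_range j (i - 1) (band i j).
Proof.
  intro H. unfold band, in_range. rewrite !Forall_app. repeat split.
  - apply Forall_map, Forall_rev, Forall_seq. simpl. lia.
  - constructor; [simpl; lia|constructor].
  - apply Forall_map, Forall_seq. simpl. lia.
Qed.

Notation dpow n m := (wpow (delta n) m).
Notation epow n m := (wpow (eps n) m).

Section Garside.
Variable n : nat.

Lemma beq_conj_winv (x d z : word) : valid n x -> valid n z ->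
  beq n (x ++ d) (d ++ z) -> beq n (winv x ++ d) (d ++ winv z).
Proof.
  intros Vx Vz H. transitivity (winv x ++ d ++ z ++ winv z).
  - now rewrite cancel_winv_r, app_nil_r.
  - now rewrite (app_assoc d z), <- H, !app_assoc, cancel_winv_l.
Qed.

Lemma commutes_far (a : nat) (b : bool) (c : nat) :
  1 <= a <= n - 1 -> 1 <= c <= n - 1 -> a + 2 <= c \/ c + 2 <= a ->
  commutes n [(a, b)] [sigma c].
Proof.
  intros Ha Hc Hac.
  assert (Hpos : commutes n [sigma a] [sigma c]).
  { destruct Hac; [|symmetry]; apply brel_beq; constructor; lia. }
  destruct b; [exact Hpos|].
  apply commutes_sym, (commutes_winv n [sigma c] [sigma a]); [apply valid_letter; lia|].
  now apply commutes_sym.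
Qed.

Lemma commutes_far_sigmas (a : nat) (b : bool) (L : list nat) : 1 <= a <= n - 1 ->
  Forall (fun c => 1 <= c <= n - 1 /\ (a + 2 <= c \/ c + 2 <= a)) L ->
  commutes n [(a, b)] (map sigma L).
Proof.
  intros Ha HL. induction HL as [|c L [Hc Hac] HL IH]; [apply beq_refl|].
  apply (commutes_app n _ [sigma c]); [now apply commutes_far|exact IH].
Qed.

Lemma valid_desc (j : nat) : j <= n - 1 -> valid n (desc j).
Proof. intro H. apply valid_sigmas, Forall_rev, Forall_seq. lia. Qed.

Lemma letter_desc_shift (i : nat) (b : bool) (j : nat) : 1 <= i -> i < j -> j <= n - 1 ->
  beq n ([(i, b)] ++ desc j) (desc j ++ [(S i, b)]).
Proof.
  intros Hi Hij Hj.
  set (B := map sigma (rev (seq (S (S i)) (j - i - 1)))).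
  set (C := desc (i - 1)).
  assert (Hdesc : desc j = B ++ [sigma (S i); sigma i] ++ C).
  { assert (Hseq : seq 1 j = seq 1 (i - 1) ++ [i; S i] ++ seq (S (S i)) (j - i - 1)).
    { replace j with ((i - 1) + (2 + (j - i - 1))) at 1 by lia. rewrite seq_app.
      now replace (1 + (i - 1)) with i by lia. }
    unfold desc, B, C. rewrite Hseq, !rev_app_distr, !map_app. simpl. now rewrite <- app_assoc. }
  assert (HB : commutes n [sigma i] B).
  { apply commutes_far_sigmas; [lia|]. apply Forall_rev, Forall_seq. lia. }
  assert (HC : commutes n [sigma (S i)] C).
  { apply commutes_far_sigmas; [lia|]. apply Forall_rev, Forall_seq. lia. }
  assert (Hsigma : beq n ([sigma i] ++ desc j) (desc j ++ [sigma (S i)])).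
  { rewrite Hdesc, app_assoc, HB.
    transitivity (B ++ ([sigma i; sigma (S i); sigma i] ++ C)); [now rewrite <- !app_assoc|].
    rewrite <- Nat.add_1_r, (brel_beq n _ _ (brel_braid n i Hi ltac:(lia))), Nat.add_1_r.
    transitivity (B ++ [sigma (S i); sigma i] ++ ([sigma (S i)] ++ C)); [reflexivity|].
    now rewrite HC, !app_assoc. }
  destruct b; [exact Hsigma|].
  apply (beq_conj_winv [sigma i] (desc j) [sigma (S i)]);
    [apply valid_letter; lia|apply valid_letter; lia|exact Hsigma].
Qed.

Lemma word_desc_shift (w : word) (j : nat) : in_range 1 (j - 1) w -> 1 <= j <= n - 1 ->
  beq n (w ++ desc j) (desc j ++ shift w).
Proof.
  intros Hw Hj. induction Hw as [|[i b] w Hi Hw IH]; [simpl; now rewrite app_nil_r|].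
  simpl in Hi. change (((i, b) :: w) ++ desc j) with ([(i, b)] ++ w ++ desc j).
  rewrite IH, app_assoc, letter_desc_shift by lia. now rewrite <- app_assoc.
Qed.

Lemma sigma_desc_conj (j : nat) : 1 <= j <= n - 1 ->
  beq n ([sigma j] ++ desc j) (desc j ++ band (S j) 1).
Proof.
  intro Hj. set (E := shift (desc (j - 1))).
  assert (VE : valid n E).
  { apply Forall_map, Forall_map, Forall_rev, Forall_seq. simpl. lia. }
  assert (Hdesc : desc j = [sigma j] ++ desc (j - 1)).
  { replace j with (S (j - 1)) at 1 by lia. rewrite desc_S. now replace (S (j - 1)) with j by lia. }
  assert (Hdesc' : desc j = E ++ [sigma 1]).
  { unfold E. replace j with (S (j - 1)) at 1 by lia. apply desc_S_shift. }
  assert (Hshift : beq n (desc (j - 1) ++ desc j) (desc j ++ E)).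
  { apply word_desc_shift; [|lia]. eapply in_range_mono; [..|apply in_range_desc]; lia. }
  rewrite band_1 by lia. fold E.
  transitivity ([sigma j] ++ desc j ++ E ++ winv E); [now rewrite cancel_winv_r, app_nil_r|].
  rewrite (app_assoc (desc j) E), <- Hshift, (app_assoc E [sigma 1]), <- Hdesc'.
  rewrite !app_assoc. now rewrite Hdesc.
Qed.

Lemma band_desc_conj (j m : nat) : 1 <= j <= m -> m <= n - 1 ->
  beq n (band (S m) j ++ desc m) (desc m ++ band (S j) 1).
Proof.
  intro Hj. induction m as [|m IH]; intro Hm; [lia|].
  destruct (Nat.eq_dec j (S m)) as [<-|Hjm].
  - rewrite band_succ. apply sigma_desc_conj. lia.
  - rewrite band_SS, desc_S by lia. rewrite <- !app_assoc. apply beq_app_l.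
    rewrite (app_assoc (winv _)), cancel_winv_l by (apply valid_letter; lia).
    apply IH; lia.
Qed.

Lemma valid_delta : valid n (delta n).
Proof. rewrite delta_desc. apply valid_desc. lia. Qed.

Lemma valid_dpow (m : Z) : valid n (dpow n m).
Proof. apply valid_wpow, valid_delta. Qed.

Lemma positive_delta : positive n (delta n).
Proof.
  exists (map (fun i => (S i, i)) (rev (seq 1 (n - 1)))). split.
  - apply Forall_map, Forall_rev, Forall_seq. lia.
  - rewrite delta_desc. unfold desc. induction (rev (seq 1 (n - 1))) as [|i l IH]; [reflexivity|].
    simpl. now rewrite band_succ, <- IH.
Qed.

Lemma positive_dpow (k : Z) : (0 <= k)%Z -> positive n (dpow n k).
Proof.
  intro Hk. pattern k. apply natlike_ind; [apply positive_nil| |exact Hk].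
  intros x Hx IH. rewrite <- Z.add_1_r, wpow_succ by apply valid_delta.
  now apply positive_app; [|apply positive_delta].
Qed.

End Garside.

Section DeltaPowers.
Variable n : nat.
Hypothesis n_ge2 : 2 <= n.

Lemma valid_eps : valid n (eps n).
Proof. rewrite eps_delta_sigma1, valid_app. split; [apply valid_delta|apply valid_letter; lia]. Qed.

Lemma expsum_delta : expsum (delta n) = (Z.of_nat n - 1)%Z.
Proof. rewrite delta_desc. unfold desc. rewrite expsum_sigmas, length_rev, length_seq. lia. Qed.

Lemma expsum_dpow (m : Z) : expsum (dpow n m) = (m * (Z.of_nat n - 1))%Z.
Proof. now rewrite expsum_wpow, expsum_delta. Qed.

Lemma expsum_eps : expsum (eps n) = Z.of_nat n.
Proof. rewrite eps_delta_sigma1, expsum_app, expsum_delta. cbn [expsum sigma letter_exp]. lia. Qed.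

Lemma word_delta_shift (w : word) :
  in_range 1 (n - 2) w -> beq n (w ++ delta n) (delta n ++ shift w).
Proof.
  intro Hw. rewrite delta_desc. apply word_desc_shift; [|lia].
  eapply in_range_mono; [..|exact Hw]; lia.
Qed.

Lemma epow_desc (k : nat) : k <= n - 1 ->
  beq n (epow n (Z.of_nat k)) (dpow n (Z.of_nat k) ++ desc k).
Proof.
  induction k as [|k IH]; intro Hk; [reflexivity|].
  rewrite Nat2Z.inj_succ, <- Z.add_1_r, !wpow_succ by auto using valid_eps, valid_delta.
  rewrite IH by lia.
  rewrite eps_delta_sigma1, <- !app_assoc, (app_assoc (desc k)), word_delta_shift.
  - now rewrite desc_S_shift, <- !app_assoc.
  - eapply in_range_mono; [..|apply in_range_desc]; lia.
Qed.

Lemma epow_delta : beq n (epow n (Z.of_nat n - 1)) (dpow n (Z.of_nat n)).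
Proof.
  replace (Z.of_nat n - 1)%Z with (Z.of_nat (n - 1)) by lia.
  rewrite epow_desc, <- delta_desc by lia.
  replace (Z.of_nat n) with (Z.of_nat (n - 1) + 1)%Z by lia.
  now rewrite wpow_succ by apply valid_delta.
Qed.

Lemma dpow_mul_n_epow (P : Z) :
  beq n (dpow n (Z.of_nat n * P)) (epow n ((Z.of_nat n - 1) * P)).
Proof.
  rewrite <- wpow_mul by apply valid_delta. rewrite <- wpow_mul by apply valid_eps.
  apply wpow_beq; [apply valid_dpow|symmetry; apply epow_delta].
Qed.

Lemma delta_n_commutes_sigma (i : nat) :
  1 <= i <= n - 1 -> commutes n (dpow n (Z.of_nat n)) [sigma i].
Proof.
  assert (Hinv : commutes n (dpow n (Z.of_nat n)) (winv (delta n))).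
  { apply commutes_winv; [apply valid_delta|]. now apply commutes_wpow_self, valid_delta. }
  assert (Hdelta : commutes n (dpow n (Z.of_nat n)) (delta n))
    by now apply commutes_wpow_self, valid_delta.
  induction i as [|i IH]; intro Hi; [lia|].
  destruct (Nat.eq_dec i 0) as [->|Hi0].
  - apply (commutes_beq n _ (winv (delta n) ++ eps n)).
    { now rewrite eps_delta_sigma1, app_assoc, cancel_winv_l by apply valid_delta. }
    apply commutes_app; [exact Hinv|].
    apply (commutes_beq_l n _ _ _ epow_delta), commutes_wpow_self, valid_eps.
  - apply (commutes_beq n _ (winv (delta n) ++ [sigma i] ++ delta n)).
    { rewrite word_delta_shift by (repeat constructor; simpl; lia).
      now rewrite app_assoc, cancel_winv_l by apply valid_delta. }
    apply commutes_app; [exact Hinv|]. apply commutes_app; [apply IH; lia|exact Hdelta].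
Qed.

Lemma central_delta_n : central n (dpow n (Z.of_nat n)).
Proof.
  intros v Vv. induction Vv as [|[i b] v Hi Hv IH]; [simpl; now rewrite app_nil_r|].
  apply (commutes_app n _ [(i, b)]); [|exact IH].
  destruct b; [now apply delta_n_commutes_sigma|].
  apply (commutes_winv n _ [sigma i]); [now apply valid_letter|].
  now apply delta_n_commutes_sigma.
Qed.

Lemma central_dpow_mul_n (m : Z) : central n (dpow n (Z.of_nat n * m)).
Proof.
  intros v Vv. apply (commutes_beq_l n (wpow (dpow n (Z.of_nat n)) m)).
  - apply wpow_mul, valid_delta.
  - now apply central_wpow; [apply valid_dpow|apply central_delta_n|].
Qed.

(* delta^-1 a_ij delta is a_(i+1)(j+1), or a_(j+1)1 when i = n. *)
Lemma band_delta_conj (i j : nat) : band_index n (i, j) ->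
  exists i' j', band_index n (i', j') /\ beq n (band i j ++ delta n) (delta n ++ band i' j').
Proof.
  intros (Hj & Hji & Hi). destruct (Nat.eq_dec i n) as [->|Hin].
  - exists (S j), 1. split; [simpl; lia|]. rewrite delta_desc.
    replace (band n j) with (band (S (n - 1)) j) by (f_equal; lia). apply band_desc_conj; lia.
  - exists (S i), (S j). split; [simpl; lia|]. rewrite <- shift_band. apply word_delta_shift.
    eapply in_range_mono; [..|apply in_range_band]; lia.
Qed.

Lemma bands_delta_conj (l : list (nat * nat)) : Forall (band_index n) l ->
  exists l', Forall (band_index n) l' /\ beq n (bands l ++ delta n) (delta n ++ bands l').
Proof.
  induction 1 as [|[i j] l Hij Hl IH].
  - exists []. split; [constructor|]. simpl. now rewrite app_nil_r.
  - destruct IH as (l' & Hl' & Hbl). destruct (band_delta_conj i j Hij) as (i' & j' & Hij' & Hb).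
    exists ((i', j') :: l'). split; [now constructor|].
    change (bands ((i, j) :: l)) with (band i j ++ bands l).
    change (bands ((i', j') :: l')) with (band i' j' ++ bands l').
    now rewrite <- app_assoc, Hbl, app_assoc, Hb, app_assoc.
Qed.

Lemma positive_conj_delta (w : word) : positive n w -> positive n (winv (delta n) ++ w ++ delta n).
Proof.
  intros (l & Hl & Hw)%positive_bands. destruct (bands_delta_conj l Hl) as (l' & Hl' & Hbl).
  rewrite Hw, Hbl, app_assoc, cancel_winv_l by apply valid_delta.
  exists l'. split; [|reflexivity]. eapply Forall_impl; [|exact Hl']. now intros [].
Qed.

Lemma positive_conj_dpow_nonneg (k : Z) (w : word) : (0 <= k)%Z ->
  positive n w -> positive n (winv (dpow n k) ++ w ++ dpow n k).
Proof.
  intros Hk Hw. pattern k. apply natlike_ind; [simpl; now rewrite app_nil_r| |exact Hk].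
  intros x Hx IH. rewrite <- Z.add_1_r.
  rewrite (winv_beq n _ _ (valid_dpow n _) (wpow_succ n _ x (valid_delta n))), wpow_succ, winv_app
    by apply valid_delta.
  replace ((winv (delta n) ++ winv (dpow n x)) ++ w ++ dpow n x ++ delta n)
    with (winv (delta n) ++ (winv (dpow n x) ++ w ++ dpow n x) ++ delta n)
    by now rewrite <- !app_assoc.
  now apply positive_conj_delta.
Qed.

Lemma positive_conj_dpow (m : Z) (w : word) :
  positive n w -> positive n (winv (dpow n m) ++ w ++ dpow n m).
Proof.
  intro Hw.
  (* Reduce to a nonnegative exponent by splitting off the central power delta^(-n|m|). *)
  set (K := (Z.of_nat n * - Z.abs m)%Z). set (m' := (m - K)%Z).
  assert (Hm : beq n (dpow n m) (dpow n m' ++ dpow n K)).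
  { rewrite <- wpow_add by apply valid_delta. unfold m'. now rewrite Z.sub_add. }
  rewrite (winv_beq n _ _ (valid_dpow n _) Hm), Hm, winv_app.
  replace ((winv (dpow n K) ++ winv (dpow n m')) ++ w ++ dpow n m' ++ dpow n K)
    with (winv (dpow n K) ++ (winv (dpow n m') ++ w ++ dpow n m') ++ dpow n K)
    by now rewrite <- !app_assoc.
  rewrite conj_central; [|apply valid_dpow| |apply central_dpow_mul_n].
  - apply positive_conj_dpow_nonneg; [unfold m', K; nia|exact Hw].
  - apply positive_valid, positive_conj_dpow_nonneg; [unfold m', K; nia|exact Hw].
Qed.

Lemma positive_swap_dpow (c : Z) (y : word) :
  positive n (winv (dpow n c) ++ y) -> positive n (y ++ winv (dpow n c)).
Proof.
  intro Hy.
  assert (Hconj : beq n (y ++ winv (dpow n c))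
                    (winv (dpow n (- c)) ++ (winv (dpow n c) ++ y) ++ dpow n (- c))).
  { rewrite (winv_beq n _ _ (valid_dpow n _) (wpow_opp n _ c (valid_delta n))), winv_involutive,
      wpow_opp by apply valid_delta.
    now rewrite !app_assoc, cancel_winv_r by apply valid_dpow. }
  rewrite Hconj. now apply positive_conj_dpow.
Qed.

Lemma preceq_dpow_wpow (x : word) (c t : Z) : valid n x -> (0 <= t)%Z ->
  preceq n (dpow n c) x -> preceq n (dpow n (c * t)) (wpow x t).
Proof.
  intros Vx Ht Hc. pattern t. apply natlike_ind; [rewrite Z.mul_0_r; apply positive_nil| |exact Ht].
  intros t' Ht' IH. unfold preceq in *.
  rewrite <- Z.add_1_r, Z.mul_add_distr_l, Z.mul_1_r, wpow_succ by exact Vx.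
  rewrite (winv_beq n _ _ (valid_dpow n _) (wpow_add n _ _ _ (valid_delta n))), winv_app.
  assert (E : beq n (winv (dpow n c) ++ winv (dpow n (c * t')) ++ wpow x t' ++ x)
                    ((winv (dpow n c) ++ (winv (dpow n (c * t')) ++ wpow x t') ++ dpow n c)
                      ++ winv (dpow n c) ++ x)).
  { now rewrite <- !app_assoc, (app_assoc (dpow n c)), cancel_winv_r by apply valid_dpow. }
  rewrite <- app_assoc, E. apply positive_app; [|exact Hc]. now apply positive_conj_dpow.
Qed.

Lemma preceq_delta_eps : preceq n (dpow n 1) (eps n).
Proof.
  unfold preceq. simpl. rewrite app_nil_r, eps_delta_sigma1, app_assoc, cancel_winv_l
    by apply valid_delta.
  rewrite <- (band_succ 1). apply positive_band. simpl. lia.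
Qed.

Lemma epow_period (d u : Z) : (d * u = Z.of_nat n - 1)%Z ->
  beq n (wpow (epow n d) u) (dpow n (Z.of_nat n)).
Proof.
  intro Hdu. rewrite wpow_mul, Hdu by apply valid_eps. apply epow_delta.
Qed.

End DeltaPowers.

(** * Infimum, supremum and super summit sets *)

Section SummitSets.
Variable n : nat.

Lemma preceq_beq (a a' b b' : word) : valid n a -> beq n a a' -> beq n b b' ->
  preceq n a b -> preceq n a' b'.
Proof. intros Va Ha Hb. unfold preceq. now rewrite Hb, (winv_beq n _ _ Va Ha). Qed.

Lemma preceq_shift_l (r N : Z) (x : word) :
  preceq n (dpow n r) x -> preceq n (dpow n (N + r)) (dpow n N ++ x).
Proof.
  unfold preceq. rewrite (winv_beq n _ _ (valid_dpow n _) (wpow_add n _ N r (valid_delta n))).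
  now rewrite winv_app, <- !app_assoc, (app_assoc (winv (dpow n N))), cancel_winv_l
    by apply valid_dpow.
Qed.

Lemma preceq_shift_r (s N : Z) (x : word) :
  preceq n x (dpow n s) -> preceq n (dpow n N ++ x) (dpow n (N + s)).
Proof.
  unfold preceq. rewrite wpow_add by apply valid_delta.
  now rewrite winv_app, <- !app_assoc, (app_assoc (winv (dpow n N))), cancel_winv_l
    by apply valid_dpow.
Qed.

Lemma preceq_expsum (a b : word) : preceq n a b -> (expsum a <= expsum b)%Z.
Proof. intros H%positive_expsum. rewrite expsum_app, expsum_winv in H. lia. Qed.

Lemma preceq_refl (x : word) : valid n x -> preceq n x x.
Proof. intro Vx. unfold preceq. rewrite cancel_winv_l by exact Vx. apply positive_nil. Qed.

Lemma is_inf_beq (x y : word) (r : Z) : beq n x y -> is_inf n x r -> is_inf n y r.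
Proof.
  intros Hxy [Hr Hmax].
  split.
  - eapply preceq_beq; [..|exact Hr]; [apply valid_dpow|reflexivity|exact Hxy].
  - intros r' Hr'. apply Hmax.
    eapply preceq_beq; [..|exact Hr']; [apply valid_dpow|reflexivity|now symmetry].
Qed.

Lemma is_sup_beq (x y : word) (s : Z) : valid n x -> beq n x y -> is_sup n x s -> is_sup n y s.
Proof.
  intros Vx Hxy [Hs Hmin]. assert (Vy : valid n y) by now apply (beq_valid n x y).
  split.
  - eapply preceq_beq; [..|exact Hs]; [exact Vx|exact Hxy|reflexivity].
  - intros s' Hs'. apply Hmin.
    eapply preceq_beq; [..|exact Hs']; [exact Vy|now symmetry|reflexivity].
Qed.

Lemma is_len_beq (x y : word) (l : Z) : valid n x -> beq n x y -> is_len n x l -> is_len n y l.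
Proof.
  intros Vx Hxy (r & s & Hr & Hs & ->). exists r, s.
  split; [|split]; [eapply is_inf_beq|eapply is_sup_beq|]; eauto.
Qed.

Lemma is_len_unique (x : word) (l l' : Z) : is_len n x l -> is_len n x l' -> l = l'.
Proof.
  intros (r & s & [Hr Hrmax] & [Hs Hsmin] & ->) (r' & s' & [Hr' Hrmax'] & [Hs' Hsmin'] & ->).
  specialize (Hrmax _ Hr'). specialize (Hrmax' _ Hr). specialize (Hsmin _ Hs').
  specialize (Hsmin' _ Hs). lia.
Qed.

Lemma is_len_shift (x : word) (l N : Z) : valid n x -> is_len n x l -> is_len n (dpow n N ++ x) l.
Proof.
  intros Vx (r & s & [Hr Hrmax] & [Hs Hsmin] & ->). exists (N + r)%Z, (N + s)%Z.
  assert (Hback : beq n (dpow n (- N) ++ dpow n N ++ x) x).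
  { now rewrite app_assoc, <- wpow_add, Z.add_opp_diag_l by apply valid_delta. }
  assert (VNx : valid n (dpow n N ++ x)) by (apply valid_app; split; [apply valid_dpow|]; easy).
  split; [split|split; [split|lia]].
  - now apply preceq_shift_l.
  - intros r' Hr'%(preceq_shift_l _ (- N)).
    eapply preceq_beq in Hr'; [..|reflexivity|exact Hback]; [|apply valid_dpow].
    specialize (Hrmax _ Hr'). lia.
  - now apply preceq_shift_r.
  - intros s' Hs'%(preceq_shift_r _ (- N)).
    eapply preceq_beq in Hs'; [..|exact Hback|reflexivity];
      [|apply valid_app; split; [apply valid_dpow|exact VNx]].
    specialize (Hsmin _ Hs'). lia.
Qed.

Lemma conj_class_refl (a : word) : valid n a -> conj_class n a a.
Proof.
  intro Va. split; [exact Va|]. exists []. split; [constructor|]. simpl. now rewrite app_nil_r.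
Qed.

Lemma conj_class_beq_l (a a' b : word) : beq n a a' -> conj_class n a b -> conj_class n a' b.
Proof.
  intros Ha (Vb & c & Vc & Hb). split; [exact Vb|].
  exists c. split; [exact Vc|]. now rewrite <- Ha.
Qed.

Lemma conj_class_beq_r (a b b' : word) :
  valid n b' -> beq n b b' -> conj_class n a b -> conj_class n a b'.
Proof.
  intros Vb' Hb (_ & c & Vc & Hbc). split; [exact Vb'|].
  exists c. split; [exact Vc|]. now rewrite <- Hb.
Qed.

Lemma conj_class_expsum (a b : word) : conj_class n a b -> expsum b = expsum a.
Proof.
  intros (_ & c & _ & Hb). rewrite (expsum_beq n _ _ Hb), !expsum_app, expsum_winv. lia.
Qed.

Lemma sss_beq (a a' b b' : word) :
  beq n a a' -> beq n b b' -> valid n b' -> sss n a b -> sss n a' b'.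
Proof.
  intros Ha Hb Vb' [Cb (l & Hl & Hmin)]. split.
  - eapply conj_class_beq_l; [exact Ha|]. now apply (conj_class_beq_r a b b').
  - exists l. split; [apply (is_len_beq b b' l); [apply Cb|exact Hb|exact Hl]|].
    intros c l' Hc Hl'. apply (Hmin c l'); [|exact Hl'].
    eapply conj_class_beq_l; [symmetry; exact Ha|exact Hc].
Qed.

End SummitSets.

Lemma Z_max_exists (P : Z -> Prop) (a B : Z) : P a -> (forall r, P r -> (r <= B)%Z) ->
  exists r, P r /\ forall r', P r' -> (r' <= r)%Z.
Proof.
  intros Ha HB. remember (Z.to_nat (B - a)) as k eqn:Hk.
  assert (Hle : (Z.to_nat (B - a) <= k)%nat) by lia. clear Hk. revert a Ha Hle.
  induction k as [|k IH]; intros a Ha Hle.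
  - exists a. split; [exact Ha|]. intros r' Hr'. specialize (HB r' Hr'). lia.
  - destruct (classic (exists r, P r /\ (a < r)%Z)) as [(r & Hr & Har)|Hno].
    + apply (IH r Hr). specialize (HB r Hr). lia.
    + exists a. split; [exact Ha|]. intros r' Hr'. apply Z.nlt_ge. intro Har'. eauto.
Qed.

Lemma Z_min_exists (P : Z -> Prop) (a B : Z) : P a -> (forall r, P r -> (B <= r)%Z) ->
  exists r, P r /\ forall r', P r' -> (r <= r')%Z.
Proof.
  intros Ha HB.
  destruct (Z_max_exists (fun r => P (- r)%Z) (- a) (- B)) as (r & Hr & Hmax).
  - now rewrite Z.opp_involutive.
  - intros r Hr. specialize (HB _ Hr). lia.
  - exists (- r)%Z. split; [exact Hr|]. intros r' Hr'.
    specialize (Hmax (- r')%Z). rewrite Z.opp_involutive in Hmax. specialize (Hmax Hr'). lia.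
Qed.

Section LengthBounds.
Variable n : nat.
Hypothesis n_ge2 : 2 <= n.

Lemma preceq_dpow_expsum (r : Z) (x : word) :
  preceq n (dpow n r) x -> (r * (Z.of_nat n - 1) <= expsum x)%Z.
Proof. intros H%preceq_expsum. now rewrite expsum_dpow in H. Qed.

Lemma preceq_expsum_dpow (s : Z) (x : word) :
  preceq n x (dpow n s) -> (expsum x <= s * (Z.of_nat n - 1))%Z.
Proof. intros H%preceq_expsum. now rewrite expsum_dpow in H. Qed.

Lemma is_len_exists (x : word) (R S : Z) : valid n x ->
  preceq n (dpow n R) x -> preceq n x (dpow n S) -> exists l, is_len n x l /\ (l <= S - R)%Z.
Proof.
  intros Vx HR HS.
  destruct (Z_max_exists (fun r => preceq n (dpow n r) x) R (Z.abs (expsum x)))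
    as (r & Hr & Hmax); [exact HR| |].
  { intros r H%preceq_dpow_expsum. nia. }
  destruct (Z_min_exists (fun s => preceq n x (dpow n s)) S (- Z.abs (expsum x)))
    as (s & Hs & Hmin); [exact HS| |].
  { intros s H%preceq_expsum_dpow. nia. }
  exists (s - r)%Z. split; [now exists r, s|].
  specialize (Hmax R HR). specialize (Hmin S HS). lia.
Qed.

Lemma is_len_nonneg (x : word) (l : Z) : is_len n x l -> (0 <= l)%Z.
Proof.
  intros (r & s & [Hr _] & [Hs _] & ->).
  apply preceq_dpow_expsum in Hr. apply preceq_expsum_dpow in Hs. nia.
Qed.

Lemma is_len_pos (x : word) (l : Z) : is_len n x l ->
  ~ (Z.of_nat n - 1 | expsum x)%Z -> (1 <= l)%Z.
Proof.
  intros (r & s & [Hr _] & [Hs _] & ->) Hndiv.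
  apply preceq_dpow_expsum in Hr. apply preceq_expsum_dpow in Hs.
  destruct (Z.eq_dec r s) as [<-|Hrs]; [|nia].
  exfalso. apply Hndiv. exists r. lia.
Qed.

Lemma sss_shift (a b : word) (m : Z) : sss n a b ->
  sss n (dpow n (Z.of_nat n * m) ++ a) (dpow n (Z.of_nat n * m) ++ b).
Proof.
  set (z := dpow n (Z.of_nat n * m)).
  assert (Vz : valid n z) by apply valid_dpow.
  assert (Hz : central n z) by apply central_dpow_mul_n, n_ge2.
  assert (Hconj : forall c x, valid n c -> beq n (z ++ winv c ++ x ++ c) (winv c ++ (z ++ x) ++ c)).
  { intros c x Vc. now rewrite app_assoc, (Hz (winv c)), <- !app_assoc by now apply valid_winv. }
  intros [(Vb & c & Vc & Hb) (l & Hl & Hmin)]. split; [split|].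
  - now apply valid_app.
  - exists c. split; [exact Vc|]. now rewrite Hb, Hconj.
  - exists l. split; [now apply is_len_shift|].
    intros c' l' (Vc' & e & Ve & Hc') Hl'.
    apply (Hmin (dpow n (Z.of_nat n * - m) ++ c') l').
    + split; [apply valid_app; split; [apply valid_dpow|exact Vc']|].
      exists e. split; [exact Ve|]. rewrite Hc', <- Hconj by exact Ve.
      unfold z. rewrite app_assoc, <- wpow_add by apply valid_delta.
      now replace (Z.of_nat n * - m + Z.of_nat n * m)%Z with 0%Z by lia.
    + now apply is_len_shift.
Qed.

End LengthBounds.

(** * Powers of periodic braids *)

Section Periodic.
Variable n : nat.
Hypothesis n_ge2 : 2 <= n.
Variables (x : word) (d u : Z).
Hypothesis valid_x : valid n x.
Hypothesis u_pos : (1 <= u)%Z.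
Hypothesis du_eq : (d * u = Z.of_nat n - 1)%Z.
Hypothesis delta_prefix : preceq n (dpow n d) x.
Hypothesis x_period : beq n (wpow x u) (dpow n (Z.of_nat n)).

Lemma wpow_period (j t : Z) : beq n (wpow x (u * j + t)) (dpow n (Z.of_nat n * j) ++ wpow x t).
Proof.
  rewrite wpow_add, <- wpow_mul by exact valid_x. apply beq_app_r.
  rewrite (wpow_beq n _ _ j (valid_wpow n _ _ valid_x) x_period).
  apply wpow_mul, valid_delta.
Qed.

Lemma wpow_preceq_dpow (t : Z) : (0 <= t <= u)%Z -> preceq n (wpow x t) (dpow n (d * t + 1)).
Proof.
  intro Ht. set (e := (d * (u - t))%Z).
  assert (He : preceq n (dpow n e) (wpow x (u - t))) by (apply preceq_dpow_wpow; auto; lia).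
  assert (Vt : valid n (wpow x t)) by now apply valid_wpow.
  assert (Vut : valid n (wpow x (u - t))) by now apply valid_wpow.
  assert (Hinv : beq n (winv (wpow x t)) (wpow x (u - t) ++ dpow n (- Z.of_nat n))).
  { rewrite wpow_opp by apply valid_delta.
    rewrite <- (winv_beq n _ _ (valid_wpow n _ _ valid_x) x_period).
    transitivity (winv (wpow x t) ++ wpow x u ++ winv (wpow x u)).
    - now rewrite cancel_winv_r, app_nil_r by now apply valid_wpow.
    - replace u with (t + (u - t))%Z at 1 by lia.
      now rewrite wpow_add, !app_assoc, cancel_winv_l by easy. }
  unfold preceq in *. rewrite Hinv, <- app_assoc, <- wpow_add by apply valid_delta.
  replace (- Z.of_nat n + (d * t + 1))%Z with (- e)%Z by (unfold e; lia).
  rewrite wpow_opp by apply valid_delta.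
  now apply positive_swap_dpow.
Qed.

Lemma is_len_wpow_le (m : Z) :
  exists l, is_len n (wpow x m) l /\ (l <= 1)%Z /\ ((u | m)%Z -> (l <= 0)%Z).
Proof.
  set (j := (m / u)%Z). set (t := (m mod u)%Z).
  assert (Ht : (0 <= t < u)%Z) by (apply Z.mod_pos_bound; lia).
  assert (Hm : beq n (wpow x m) (dpow n (Z.of_nat n * j) ++ wpow x t)).
  { rewrite <- wpow_period. unfold j, t. now rewrite <- Z.div_mod by lia. }
  assert (Vm : valid n (wpow x m)) by now apply valid_wpow.
  assert (Vt : valid n (wpow x t)) by now apply valid_wpow.
  assert (Vjt : valid n (dpow n (Z.of_nat n * j) ++ wpow x t))
    by (apply valid_app; split; [apply valid_dpow|exact Vt]).
  set (R := (Z.of_nat n * j + d * t)%Z).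
  assert (Hlow : preceq n (dpow n R) (wpow x m)).
  { eapply preceq_beq; [apply valid_dpow|reflexivity|symmetry; exact Hm|].
    apply preceq_shift_l, preceq_dpow_wpow; auto; lia. }
  assert (Hup : preceq n (wpow x m) (dpow n (R + 1))).
  { eapply preceq_beq; [exact Vjt|symmetry; exact Hm|reflexivity|].
    unfold R. rewrite <- Z.add_assoc. apply preceq_shift_r.
    apply wpow_preceq_dpow. lia. }
  destruct (is_len_exists n n_ge2 _ R (R + 1) Vm Hlow Hup) as (l & Hl & Hl1).
  exists l. split; [exact Hl|]. split; [lia|]. intro Hdiv.
  assert (Ht0 : t = 0%Z) by now apply Z.mod_divide; [lia|].
  assert (Hup0 : preceq n (wpow x m) (dpow n R)).
  { unfold R. rewrite Ht0, Z.mul_0_r, Z.add_0_r.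
    rewrite Ht0 in Hm. simpl in Hm. rewrite app_nil_r in Hm.
    apply (preceq_beq n (wpow x m) _ (wpow x m)); [exact Vm|reflexivity|exact Hm|].
    now apply preceq_refl. }
  destruct (is_len_exists n n_ge2 _ R R Vm Hlow Hup0) as (l0 & Hl0 & Hl0le).
  rewrite (is_len_unique n _ _ _ Hl Hl0). lia.
Qed.

End Periodic.

(** * Counting braids up to equality *)

Section Counting.
Variable n : nat.

Lemma pairwise_distinct_length_le (l1 l2 : list word) :
  ForallOrdPairs (fun u v => ~ beq n u v) l1 ->
  (forall x, In x l1 -> Exists (beq n x) l2) -> length l1 <= length l2.
Proof.
  revert l2. induction l1 as [|x l1 IH]; intros l2 Hdist Hcov; [simpl; lia|].
  inversion Hdist as [|? ? Hx Hdist']; subst.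
  destruct (proj1 (Exists_exists _ _) (Hcov x (or_introl eq_refl))) as (y & Hy & Hxy).
  destruct (in_split y l2) as (a & b & ->); [exact Hy|].
  enough (length l1 <= length (a ++ b)) by (rewrite length_app in *; simpl; lia).
  apply IH; [exact Hdist'|]. intros z Hz.
  destruct (proj1 (Exists_exists _ _) (Hcov z (or_intror Hz))) as (w & Hw & Hzw).
  apply Exists_exists. exists w. split; [|exact Hzw].
  apply in_app_or in Hw as [Hw|[<-|Hw]]; try (apply in_or_app; auto).
  exfalso. apply (proj1 (Forall_forall _ _) Hx z Hz). now rewrite Hxy, Hzw.
Qed.

Lemma has_card_le (P Q : word -> Prop) (N M : nat) :
  has_card n P N -> has_card n Q M -> (forall w, P w -> Q w) -> N <= M.
Proof.
  intros (l1 & <- & HP & Hdist & _) (l2 & <- & _ & _ & Hcov) HPQ.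
  apply pairwise_distinct_length_le; [exact Hdist|].
  intros x Hx. apply Hcov, HPQ. now apply (proj1 (Forall_forall _ _) HP).
Qed.

Lemma has_card_iff (P Q : word -> Prop) (N : nat) :
  (forall w, P w <-> Q w) -> has_card n P N -> has_card n Q N.
Proof.
  intros HPQ (l & Hl & HP & Hdist & Hcov). exists l. repeat split; [exact Hl| |exact Hdist|].
  - eapply Forall_impl; [|exact HP]. apply HPQ.
  - intros w Hw. now apply Hcov, HPQ.
Qed.

Lemma has_card_bij (P Q : word -> Prop) (N : nat) (f g : word -> word) :
  (forall w, P w -> Q (f w)) -> (forall w, Q w -> P (g w)) ->
  (forall w, Q w -> beq n (f (g w)) w) ->
  (forall u v, P u -> P v -> beq n u v <-> beq n (f u) (f v)) ->
  has_card n P N -> has_card n Q N.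
Proof.
  intros HPQ HQP Hfg Hf (l & Hl & HP & Hdist & Hcov).
  assert (Hin : forall x, In x l -> P x) by now apply Forall_forall.
  exists (map f l). repeat split.
  - now rewrite length_map.
  - apply Forall_map. eapply Forall_impl; [|exact HP]. exact HPQ.
  - clear Hcov Hl Hin.
    induction Hdist as [|x l Hx Hdist IH]; constructor; inversion HP as [|? ? Px Pl]; subst.
    + apply Forall_map, Forall_forall. intros y Hy Hxy.
      apply (proj1 (Forall_forall _ _) Hx y Hy), (Hf x y Px); [|exact Hxy].
      now apply (proj1 (Forall_forall _ _) Pl).
    + now apply IH.
  - intros w Hw. destruct (proj1 (Exists_exists _ _) (Hcov _ (HQP w Hw))) as (x & Hx & Hgx).
    apply Exists_exists. exists (f x). split; [now apply in_map|].
    rewrite <- (Hfg w Hw). exact (proj1 (Hf _ _ (HQP w Hw) (Hin x Hx)) Hgx).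
Qed.

Lemma has_card_of_cover (L : list word) (P : word -> Prop) :
  (forall w, P w -> Exists (beq n w) L) -> exists N, has_card n P N.
Proof.
  revert P. induction L as [|x L IH]; intros P HL.
  - exists 0, []. repeat split; [constructor..|]. intros w Hw. specialize (HL w Hw). inversion HL.
  - destruct (classic (exists y, P y /\ beq n y x)) as [(y & Hy & Hyx)|Hno].
    + destruct (IH (fun w => P w /\ ~ beq n w x)) as (N & l & Hl & HP & Hdist & Hcov).
      { intros w [Hw Hwx]. specialize (HL w Hw). inversion HL; subst; [contradiction|assumption]. }
      exists (S N), (y :: l). repeat split.
      * simpl. now rewrite Hl.
      * constructor; [exact Hy|]. eapply Forall_impl; [|exact HP]. now intros w [].
      * constructor; [|exact Hdist]. apply Forall_forall. intros v Hv Hyv.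
        apply (proj2 (proj1 (Forall_forall _ _) HP v Hv)). now rewrite <- Hyv.
      * intros w Hw. destruct (classic (beq n w x)) as [Hwx|Hwx].
        -- constructor. now rewrite Hwx.
        -- apply Exists_cons_tl, Hcov. now split.
    + apply IH. intros w Hw. specialize (HL w Hw). inversion HL; subst; [|assumption].
      exfalso. eauto.
Qed.

End Counting.

Fixpoint tuples {A : Type} (L : list A) (k : nat) : list (list A) :=
  match k with
  | 0 => [[]]
  | S k' => flat_map (fun a => map (cons a) (tuples L k')) L
  end.

Lemma in_tuples {A : Type} (L : list A) (t : list A) :
  Forall (fun x => In x L) t -> In t (tuples L (length t)).
Proof.
  induction 1 as [|x t Hx Ht IH]; simpl; [now left|].
  apply in_flat_map. exists x. split; [exact Hx|]. now apply in_map.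
Qed.

Definition zrange (lo hi : Z) : list Z :=
  map (fun k => (lo + Z.of_nat k)%Z) (seq 0 (Z.to_nat (hi - lo + 1))).

Lemma in_zrange (lo hi r : Z) : (lo <= r <= hi)%Z -> In r (zrange lo hi).
Proof.
  intro H. apply in_map_iff. exists (Z.to_nat (r - lo)). split; [lia|]. apply in_seq. lia.
Qed.

(** * Super summit sets of powers of eps *)

Lemma not_divide_mul_coprime (N u d m : Z) : (1 <= d)%Z -> (N - 1 = u * d)%Z ->
  ~ (u | m)%Z -> ~ (N - 1 | m * (d * N))%Z.
Proof.
  intros Hd HN Hum [k Hk]. apply Hum.
  assert (Hmn : (m * N = k * u)%Z) by (apply (Z.mul_reg_l _ _ d); nia).
  apply (Z.gauss _ N); [exists k; lia|].
  apply Z.bezout_1_gcd. exists (- d)%Z, 1%Z. lia.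
Qed.

Definition conj_epow (n : nat) (m : Z) (c : word) : word := winv c ++ epow n m ++ c.

Section Stability.
Variable n : nat.
Hypothesis n_ge2 : 2 <= n.

Lemma sss_epow_dpow_preceq (d : Z) (a : word) : (1 <= d)%Z -> (d | Z.of_nat n - 1)%Z ->
  sss n (epow n d) a -> preceq n (dpow n d) a.
Proof.
  intros Hd [u Hu] [Ca (l & Hl & Hmin)].
  assert (Ved : valid n (epow n d)) by apply valid_wpow, valid_eps, n_ge2.
  destruct (is_len_wpow_le n n_ge2 (eps n) 1 (Z.of_nat n - 1) (valid_eps n n_ge2)
              ltac:(lia) ltac:(lia) (preceq_delta_eps n n_ge2) (epow_delta n n_ge2) d)
    as (l1 & Hl1 & Hl1le & _).
  specialize (Hmin _ _ (conj_class_refl n _ Ved) Hl1).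
  destruct Hl as (r & s & [Hr _] & [Hs _] & Hls).
  assert (Hexp : expsum a = (d * Z.of_nat n)%Z).
  { rewrite (conj_class_expsum n _ _ Ca), expsum_wpow, expsum_eps by exact n_ge2. lia. }
  (* len a <= len eps^d <= 1 and expsum a = d n force inf a >= d. *)
  assert (Hdr : (d <= r)%Z).
  { apply preceq_dpow_expsum in Hr; [|exact n_ge2]. apply preceq_expsum_dpow in Hs; [|exact n_ge2].
    nia. }
  assert (Hinv : beq n (winv (dpow n d)) (dpow n (r - d) ++ winv (dpow n r))).
  { rewrite <- !wpow_opp, <- wpow_add by apply valid_delta.
    now replace (r - d + - r)%Z with (- d)%Z by lia. }
  unfold preceq in *. rewrite Hinv, <- app_assoc.
  apply positive_app; [apply positive_dpow; lia|exact Hr].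
Qed.

Lemma sss_epow_stable (d : Z) (a : word) : (1 <= d)%Z -> (d | Z.of_nat n - 1)%Z ->
  sss n (epow n d) a -> stable_sss n (epow n d) a.
Proof.
  intros Hd Hdiv Ha. split; [exact Ha|]. intro m.
  assert (Hprefix := sss_epow_dpow_preceq d a Hd Hdiv Ha).
  destruct Hdiv as [u Hu]. destruct Ha as [(Va & c & Vc & Hac) _].
  assert (Ved : valid n (epow n d)) by apply valid_wpow, valid_eps, n_ge2.
  assert (Hper : beq n (wpow a u) (dpow n (Z.of_nat n))).
  { rewrite (wpow_beq n _ _ u Va Hac).
    apply wpow_conj_central; [exact Ved|exact Vc|apply central_delta_n, n_ge2|].
    apply (epow_period n n_ge2). lia. }
  destruct (is_len_wpow_le n n_ge2 a d u Va ltac:(nia) ltac:(lia) Hprefix Hper m)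
    as (lm & Hlm & Hlm1 & Hlm0).
  split; [split|].
  - now apply valid_wpow.
  - exists c. split; [exact Vc|]. rewrite (wpow_beq n _ _ m Va Hac). now apply wpow_conj.
  - exists lm. split; [exact Hlm|]. intros c' l' Hc' Hl'.
    (* The exponent sum bounds len c' below by 0, and by 1 unless u | m. *)
    assert (Hexp : expsum c' = (m * (d * Z.of_nat n))%Z).
    { rewrite (conj_class_expsum n _ _ Hc'), !expsum_wpow, expsum_eps by exact n_ge2. lia. }
    destruct (Znumtheory.Zdivide_dec u m) as [Hum|Hum].
    + specialize (Hlm0 Hum). pose proof (is_len_nonneg n n_ge2 _ _ Hl'). lia.
    + enough (1 <= l')%Z by lia. apply (is_len_pos n n_ge2 c'); [exact Hl'|].
      rewrite Hexp. now apply (not_divide_mul_coprime _ u).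
Qed.

(* A super summit element is delta^r times a product of expsum a - r (n-1) bands, and the
   length bound confines r to a finite range. *)
Lemma sss_has_card (a : word) : exists N, has_card n (sss n a) N.
Proof.
  destruct (classic (exists w0, sss n a w0)) as [(w0 & C0 & l0 & Hl0 & Hmin0)|Hno].
  2: { apply (has_card_of_cover n []). intros w Hw. exfalso. eauto. }
  set (E := expsum a).
  set (band_indices := list_prod (seq 1 n) (seq 1 n)).
  apply (has_card_of_cover n (flat_map (fun r => map (fun l => dpow n r ++ bands l)
            (tuples band_indices (Z.to_nat (E - r * (Z.of_nat n - 1)))))
          (zrange (- Z.abs E - l0) (Z.abs E)))).
  intros w [Cw (l & Hl & Hmin)].
  assert (l = l0) as -> by (specialize (Hmin w0 l0 C0 Hl0); specialize (Hmin0 w l Cw Hl); lia).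
  assert (Ew : expsum w = E) by now apply (conj_class_expsum n).
  destruct Hl as (r & s & [Hr _] & [Hs _] & Hls).
  assert (Hr' := preceq_dpow_expsum n n_ge2 _ _ Hr).
  assert (Hs' := preceq_expsum_dpow n n_ge2 _ _ Hs).
  destruct (positive_bands n _ Hr) as (bl & Hbl & Hwbl).
  apply Exists_exists. exists (dpow n r ++ bands bl). split.
  - apply in_flat_map. exists r. split; [apply in_zrange; rewrite Ew in *; nia|].
    apply (in_map (fun l => dpow n r ++ bands l)).
    assert (Hlen := expsum_beq n _ _ Hwbl).
    rewrite expsum_bands, expsum_app, expsum_winv, expsum_dpow, Ew in Hlen by exact n_ge2.
    replace (Z.to_nat (E - r * (Z.of_nat n - 1))) with (length bl) by lia.
    apply in_tuples. eapply Forall_impl; [|exact Hbl]. intros [i j] Hij.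
    apply in_prod; apply in_seq; simpl in Hij; lia.
  - rewrite <- Hwbl, app_assoc, cancel_winv_r by apply valid_dpow. reflexivity.
Qed.

Lemma wpow_conj_epow (m j : Z) (c : word) : valid n c ->
  beq n (wpow (conj_epow n m c) j) (conj_epow n (m * j) c).
Proof.
  intro Vc. unfold conj_epow. rewrite wpow_conj by (apply valid_wpow, valid_eps, n_ge2 || exact Vc).
  now rewrite wpow_mul by apply valid_eps, n_ge2.
Qed.

Lemma dpow_conj_epow (P Q : Z) (c : word) : valid n c ->
  beq n (dpow n (Z.of_nat n * P) ++ conj_epow n Q c) (conj_epow n ((Z.of_nat n - 1) * P + Q) c).
Proof.
  intro Vc. unfold conj_epow.
  rewrite app_assoc, (central_dpow_mul_n n n_ge2 P (winv c)) by now apply valid_winv.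
  rewrite (dpow_mul_n_epow n n_ge2), <- !app_assoc, (app_assoc (epow n _)), <- wpow_add
    by apply valid_eps, n_ge2.
  reflexivity.
Qed.

End Stability.

(** * The maps f and g *)

Section Transfer.
Variable n : nat.
Hypothesis n_ge2 : 2 <= n.
Variables (k p q d v : Z).
Hypothesis d_pos : (1 <= d)%Z.
Hypothesis d_divides : (d | Z.of_nat n - 1)%Z.
Hypothesis k_eq : k = (d * v)%Z.
Hypothesis bezout : ((Z.of_nat n - 1) * p + k * q = d)%Z.
Local Notation f a := (wpow a v).
Local Notation g b := (dpow n (Z.of_nat n * p) ++ wpow b q).

Lemma f_conj_epow (c : word) : valid n c -> beq n (f (conj_epow n d c)) (conj_epow n k c).
Proof. intro Vc. rewrite wpow_conj_epow by easy. now rewrite k_eq. Qed.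

Lemma g_conj_epow (c : word) : valid n c -> beq n (g (conj_epow n k c)) (conj_epow n d c).
Proof. intro Vc. rewrite wpow_conj_epow, dpow_conj_epow by easy. now rewrite bezout. Qed.

Lemma valid_g (b : word) : valid n b -> valid n (g b).
Proof. intro Vb. apply valid_app. split; [apply valid_dpow|now apply valid_wpow]. Qed.

Lemma g_beq (b b' : word) : valid n b -> beq n b b' -> beq n (g b) (g b').
Proof. intros Vb Hb. now rewrite (wpow_beq n b b' q Vb Hb). Qed.

Lemma f_conj_class (a : word) : conj_class n (epow n d) a ->
  exists c, valid n c /\ beq n a (conj_epow n d c) /\ beq n (f a) (conj_epow n k c).
Proof.
  intros (Va & c & Vc & Ha). exists c. repeat split; [exact Vc|exact Ha|].
  rewrite (wpow_beq n _ _ v Va Ha). now apply f_conj_epow.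
Qed.

Lemma g_conj_class (b : word) : conj_class n (epow n k) b ->
  exists c, valid n c /\ beq n b (conj_epow n k c) /\ beq n (g b) (conj_epow n d c).
Proof.
  intros (Vb & c & Vc & Hb). exists c. repeat split; [exact Vc|exact Hb|].
  rewrite (g_beq _ _ Vb Hb). now apply g_conj_epow.
Qed.

Lemma f_maps_class (a : word) : conj_class n (epow n d) a -> conj_class n (epow n k) (f a).
Proof.
  intro Ha. destruct (f_conj_class a Ha) as (c & Vc & _ & Hfa).
  split; [apply valid_wpow, Ha|]. now exists c.
Qed.

Lemma g_maps_class (b : word) : conj_class n (epow n k) b -> conj_class n (epow n d) (g b).
Proof.
  intro Hb. destruct (g_conj_class b Hb) as (c & Vc & _ & Hgb).
  split; [apply valid_g, Hb|]. now exists c.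
Qed.

Lemma g_f (a : word) : conj_class n (epow n d) a -> beq n (g (f a)) a.
Proof.
  intro Ha. destruct (f_conj_class a Ha) as (c & Vc & Hac & Hfa).
  rewrite (g_beq _ _ (valid_wpow n _ _ (proj1 Ha)) Hfa), g_conj_epow by exact Vc.
  now symmetry.
Qed.

Lemma f_g (b : word) : conj_class n (epow n k) b -> beq n (f (g b)) b.
Proof.
  intro Hb. destruct (g_conj_class b Hb) as (c & Vc & Hbc & Hgb).
  rewrite (wpow_beq n _ _ v (valid_g _ (proj1 Hb)) Hgb), f_conj_epow by exact Vc.
  now symmetry.
Qed.

Lemma f_stable (a : word) : stable_sss n (epow n d) a -> stable_sss n (epow n k) (f a).
Proof.
  intros [Sa Ha]. assert (Va : valid n a) by apply Sa.
  assert (Hm : forall m, sss n (wpow (epow n k) m) (wpow (f a) m)).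
  { intro m. apply (sss_beq n (wpow (epow n d) (v * m)) _ (wpow a (v * m)));
      [| |now apply valid_wpow, valid_wpow|exact (Ha _)].
    - rewrite !wpow_mul by apply valid_eps, n_ge2. now rewrite k_eq, Z.mul_assoc.
    - symmetry. now apply wpow_mul. }
  split; [|exact Hm]. specialize (Hm 1%Z). now rewrite !wpow_1 in Hm.
Qed.

Lemma g_stable (b : word) : stable_sss n (epow n k) b -> stable_sss n (epow n d) (g b).
Proof.
  intros [Sb Hb].
  (* [eps^d]^S = [eps^d]^St, so only minimality of the length of g b remains. *)
  apply sss_epow_stable; [exact n_ge2|exact d_pos|exact d_divides|].
  apply (sss_beq n (dpow n (Z.of_nat n * p) ++ wpow (epow n k) q) _ (g b));
    [|reflexivity|apply valid_g, Sb|now apply sss_shift].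
  rewrite (dpow_mul_n_epow n n_ge2), wpow_mul, <- wpow_add by apply valid_eps, n_ge2.
  now rewrite bezout.
Qed.

Lemma stable_sss_card : exists N M,
  has_card n (sss n (epow n d)) N /\ has_card n (stable_sss n (epow n d)) N /\
  has_card n (stable_sss n (epow n k)) N /\ has_card n (sss n (epow n k)) M /\ N <= M.
Proof.
  destruct (sss_has_card n n_ge2 (epow n d)) as (N & HN).
  destruct (sss_has_card n n_ge2 (epow n k)) as (M & HM).
  assert (HNd : has_card n (stable_sss n (epow n d)) N).
  { apply (has_card_iff n (sss n (epow n d))); [|exact HN].
    intro a. split; [now apply sss_epow_stable|now intros []]. }
  assert (HNk : has_card n (stable_sss n (epow n k)) N).
  { apply (has_card_bij n _ _ N (fun a => f a) (fun b => g b) f_stable g_stable); [| |exact HNd].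
    - intros b Hb. apply f_g, Hb.
    - intros a a' Ha Ha'. split; [apply wpow_beq, Ha|].
      intro Hf. rewrite <- (g_f a), <- (g_f a') by (apply Ha || apply Ha').
      apply g_beq; [apply valid_wpow, Ha|exact Hf]. }
  exists N, M. repeat split; try assumption.
  apply (has_card_le n _ _ _ _ HNk HM). now intros w [].
Qed.

End Transfer.

Theorem proposition3p5 (n : nat) (k p q : Z) :
  2 <= n ->
  ((Z.of_nat n - 1) * p + k * q = Z.gcd k (Z.of_nat n - 1))%Z ->
  let d := Z.gcd k (Z.of_nat n - 1) in
  let ed := wpow (eps n) d in
  let ek := wpow (eps n) k in
  let f := fun a => wpow a (k / d)%Z in
  let g := fun b => wpow (delta n) (Z.of_nat n * p)%Z ++ wpow b q in
  (* f : [eps^d] -> [eps^k] and g : [eps^k] -> [eps^d] are well defined *)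
  (forall a, conj_class n ed a -> conj_class n ek (f a)) /\
  (forall b, conj_class n ek b -> conj_class n ed (g b)) /\
  (* f and g are inverse to each other *)
  (forall a, conj_class n ed a -> beq n (g (f a)) a) /\
  (forall b, conj_class n ek b -> beq n (f (g b)) b) /\
  (* f([eps^d]^St) = [eps^k]^St *)
  (forall a, stable_sss n ed a -> stable_sss n ek (f a)) /\
  (forall b, stable_sss n ek b -> exists a, stable_sss n ed a /\ beq n (f a) b) /\
  (* g([eps^k]^St) = [eps^d]^St *)
  (forall b, stable_sss n ek b -> stable_sss n ed (g b)) /\
  (forall a, stable_sss n ed a -> exists b, stable_sss n ek b /\ beq n (g b) a) /\
  (* #[eps^d]^S = #[eps^d]^St = #[eps^k]^St <= #[eps^k]^S *)
  (exists N M,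
      has_card n (sss n ed) N /\ has_card n (stable_sss n ed) N /\
      has_card n (stable_sss n ek) N /\ has_card n (sss n ek) M /\ N <= M).
Proof.
  intros Hn Hbez d ed ek f g.
  assert (Hdiv : (d | Z.of_nat n - 1)%Z) by apply Z.gcd_divide_r.
  assert (Hd : (1 <= d)%Z).
  { pose proof (Z.gcd_nonneg k (Z.of_nat n - 1)).
    pose proof (proj1 (Z.gcd_eq_0 k (Z.of_nat n - 1))). lia. }
  assert (Hk : k = (d * (k / d))%Z).
  { apply Z.div_exact; [lia|]. apply Z.mod_divide; [lia|apply Z.gcd_divide_l]. }
  refine (conj _ (conj _ (conj _ (conj _ (conj _ (conj _ (conj _ (conj _ _)))))))).
  - exact (f_maps_class n Hn k d (k / d) Hk).
  - exact (g_maps_class n Hn k p q d Hbez).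
  - exact (g_f n Hn k p q d (k / d) Hk Hbez).
  - exact (f_g n Hn k p q d (k / d) Hk Hbez).
  - exact (f_stable n Hn k d (k / d) Hk).
  - intros b Hb. exists (g b). split.
    + exact (g_stable n Hn k p q d Hd Hdiv Hbez b Hb).
    + exact (f_g n Hn k p q d (k / d) Hk Hbez b (proj1 (proj1 Hb))).
  - exact (g_stable n Hn k p q d Hd Hdiv Hbez).
  - intros a Ha. exists (f a). split.
    + exact (f_stable n Hn k d (k / d) Hk a Ha).
    + exact (g_f n Hn k p q d (k / d) Hk Hbez a (proj1 (proj1 Ha))).
  - exact (stable_sss_card n Hn k p q d (k / d) Hd Hdiv Hk Hbez).
Qed.
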